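(* Let $T$ be a complete theory with monster model $\mathcal{U}$, $A\subseteq\mathcal{U}$ small, $\mu\in\mathfrak{M}_x(\mathcal{U})$, $\nu\in\mathfrak{M}_y(\mathcal{U})$, and suppose $\lambda\in\mathfrak{M}_{xy}(A)$ witnesses $\mu\geq_{\mathbb{E},A}\nu$. Then for any $\omega\in\operatorname{E}(\lambda,\mu)$, any $\varphi(y)\in\mathcal{L}_y(\mathcal{U})$ and any $\epsilon>0$, there exist $\gamma^-(x,y),\gamma^+(x,y)\in\mathbb{B}_{xy}(A)$ such that (1) $\gamma^-(x,y)\subseteq(\varphi(y)\wedge x=x)\subseteq\gamma^+(x,y)$; (2) $\omega(\gamma^+(x,y))-\omega(\gamma^-(x,y))<\epsilon$; (3) $|\omega(\gamma^{\dagger}(x,y))-\nu(\varphi(y))|<\epsilon$ for $\dagger\in\{+,-\}$.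
   Context: For $B\subseteq\mathcal{U}$, $\mathcal{L}_x(B)$ is the Boolean algebra of formulas in $x$ with parameters from $B$ modulo $T$, identified with $B$-definable sets, and embedded in $\mathcal{L}_{xy}(B)$ via $\varphi(x)\mapsto\varphi(x)\wedge y=y$; $\mathfrak{M}_x(B)$ is the set of finitely additive probability measures on $\mathcal{L}_x(B)$. For $\omega\in\mathfrak{M}_{xy}(B)$, $\pi_x(\omega)(\varphi(x))=\omega(\varphi(x)\wedge y=y)$ (similarly $\pi_y$); $\omega|_C$ is restriction. $\operatorname{E}(\lambda,\mu)=\{\omega\in\mathfrak{M}_{xy}(\mathcal{U}):\omega|_A=\lambda,\pi_x(\omega)=\mu\}$. $\lambda$ witnesses $\mu\geq_{\mathbb{E},A}\nu$ means $\pi_x(\lambda)=\mu|_A$ and $\pi_y(\omega)=\nu$ for all $\omega\in\operatorname{E}(\lambda,\mu)$. $\mathbb{B}_{xy}(A)$ is the Boolean subalgebra of $\mathcal{L}_{xy}(\mathcal{U})$ generated by $\{\varphi(x)\wedge y=y:\varphi(x)\in\mathcal{L}_x(\mathcal{U})\}\cup\mathcal{L}_{xy}(A)$. *)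

From Stdlib Require Import Reals List.
From Stdlib Require Fin.
Set Implicit Arguments.
Open Scope R_scope.

Record Language := {
  Fsym : Type; farity : Fsym -> nat;
  Rsym : Type; rarity : Rsym -> nat }.

Record Struc (L : Language) := {
  carrier :> Type;
  carrier_inh : inhabited carrier;
  funM : forall f : Fsym L, (Fin.t (farity L f) -> carrier) -> carrier;
  relM : forall r : Rsym L, (Fin.t (rarity L r) -> carrier) -> Prop }.

Inductive term (L : Language) (M : Type) (V : Type) : Type :=
| tvar : V -> term L M V
| tpar : M -> term L M V
| tapp : forall f : Fsym L, (Fin.t (farity L f) -> term L M V) -> term L M V.

Inductive form (L : Language) (M : Type) : Type -> Type :=
| feq : forall V, term L M V -> term L M V -> form L M V
| frel : forall V (r : Rsym L), (Fin.t (rarity L r) -> term L M V) -> form L M V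
| fneg : forall V, form L M V -> form L M V
| fand : forall V, form L M V -> form L M V -> form L M V
| fex : forall V, form L M (option V) -> form L M V.

Arguments tvar {L M V}. Arguments tpar {L M V}. Arguments tapp {L M V}.
Arguments feq {L M V}. Arguments frel {L M V}. Arguments fneg {L M V}.
Arguments fand {L M V}. Arguments fex {L M V}.

Definition scons {V M : Type} (a : M) (v : V -> M) : option V -> M :=
  fun o => match o with Some x => v x | None => a end.

Fixpoint teval {L} (U : Struc L) {V} (v : V -> U) (t : term L U V) : U :=
  match t with
  | tvar x => v x
  | tpar c => c
  | tapp f args => funM U f (fun i => teval U v (args i))
  end.

Fixpoint sat {L} (U : Struc L) {V} (phi : form L U V) : (V -> U) -> Prop :=
  match phi with
  | feq t1 t2 => fun v => teval U v t1 = teval U v t2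
  | frel r args => fun v => relM U r (fun i => teval U v (args i))
  | fneg p => fun v => ~ sat U p v
  | fand p q => fun v => sat U p v /\ sat U q v
  | fex p => fun v => exists a : U, sat U p (scons a v)
  end.

Fixpoint tparams_in {L M V} (B : M -> Prop) (t : term L M V) : Prop :=
  match t with
  | tvar _ => True
  | tpar c => B c
  | tapp f args => forall i, tparams_in B (args i)
  end.

Fixpoint params_in {L M V} (B : M -> Prop) (phi : form L M V) : Prop :=
  match phi with
  | feq t1 t2 => tparams_in B t1 /\ tparams_in B t2
  | frel r args => forall i, tparams_in B (args i)
  | fneg p => params_in B p
  | fand p q => params_in B p /\ params_in B q
  | fex p => params_in B p
  end.

Fixpoint tmap_params {L M V} (g : M -> M) (t : term L M V) : term L M V :=
  match t with
  | tvar x => tvar x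
  | tpar c => tpar (g c)
  | tapp f args => tapp f (fun i => tmap_params g (args i))
  end.

Fixpoint map_params {L M V} (g : M -> M) (phi : form L M V) : form L M V :=
  match phi with
  | feq t1 t2 => feq (tmap_params g t1) (tmap_params g t2)
  | frel r args => frel r (fun i => tmap_params g (args i))
  | fneg p => fneg (map_params g p)
  | fand p q => fand (map_params g p) (map_params g q)
  | fex p => fex (map_params g p)
  end.

Definition injective {X Y : Type} (f : X -> Y) := forall a b, f a = f b -> a = b.

Definition small {M : Type} (K : Type) (B : M -> Prop) : Prop :=
  (exists f : {a | B a} -> K, injective f) /\
  ~ (exists g : K -> {a | B a}, injective g).

Definition saturated {L} (K : Type) (U : Struc L) : Prop :=
  forall (C : U -> Prop) (p : form L U unit -> Prop),
    small K C ->
    (forall phi, p phi -> params_in C phi) ->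
    (forall l : list (form L U unit), (forall phi, In phi l -> p phi) ->
       exists a : U, forall phi, In phi l -> sat U phi (fun _ => a)) ->
    exists a : U, forall phi, p phi -> sat U phi (fun _ => a).

Definition automorphism {L} (U : Struc L) (s : U -> U) : Prop :=
  (exists s' : U -> U, (forall a, s' (s a) = a) /\ (forall a, s (s' a) = a)) /\
  (forall f args, s (funM U f args) = funM U f (fun i => s (args i))) /\
  (forall r args, relM U r args <-> relM U r (fun i => s (args i))).

Definition elementary_on {L} (U : Struc L) (C : U -> Prop) (g : U -> U) : Prop :=
  forall phi : form L U Empty_set, params_in C phi ->
    (sat U phi (fun e => match e with end) <->
     sat U (map_params g phi) (fun e => match e with end)).

Definition homogeneous {L} (K : Type) (U : Struc L) : Prop :=
  forall (C : U -> Prop) (g : U -> U), small K C -> elementary_on U C g ->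
    exists s, automorphism U s /\ forall c, C c -> s c = g c.

Definition monster {L} (K : Type) (U : Struc L) : Prop :=
  saturated K U /\ homogeneous K U.

(* L_V(B): subsets of U^V definable with parameters from B (T = Th(U)) *)
Definition Ldef {L} (U : Struc L) (V : Type) (B : U -> Prop) (S : (V -> U) -> Prop) : Prop :=
  exists phi : form L U V, params_in B phi /\ forall a, S a <-> sat U phi a.
Arguments Ldef {L} U V B S.

Definition allU {M : Type} : M -> Prop := fun _ => True.

Definition fa_prob {Z : Type} (D : (Z -> Prop) -> Prop) (m : (Z -> Prop) -> R) : Prop :=
  (forall S, D S -> 0 <= m S) /\
  m (fun _ => True) = 1 /\
  (forall S T, D S -> D T -> (forall z, S z -> T z -> False) ->
     m (fun z => S z \/ T z) = m S + m T).

Definition keisler {L} (U : Struc L) (V : Type) (B : U -> Prop) (m : ((V -> U) -> Prop) -> R) :=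
  fa_prob (Ldef U V B) m.
Arguments keisler {L} U V B m.

(* x = (x_1..x_n) and y = (y_1..y_m) are disjoint tuples: xy variables are Fin.t n + Fin.t m *)
Definition cyl_x {M X Y : Type} (S : (X -> M) -> Prop) : (X + Y -> M) -> Prop :=
  fun c => S (fun i => c (inl i)).          (* phi(x) /\ y = y *)
Definition cyl_y {M X Y : Type} (S : (Y -> M) -> Prop) : (X + Y -> M) -> Prop :=
  fun c => S (fun j => c (inr j)).          (* phi(y) /\ x = x *)

Definition Eset {L} (U : Struc L) (X Y : Type) (A : U -> Prop)
    (lambda : ((X + Y -> U) -> Prop) -> R) (mu : ((X -> U) -> Prop) -> R)
    (omega : ((X + Y -> U) -> Prop) -> R) : Prop :=
  keisler U (X + Y) allU omega /\
  (forall S, Ldef U (X + Y) A S -> omega S = lambda S) /\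
  (forall S, Ldef U X allU S -> omega (cyl_x S) = mu S).

Definition witnesses {L} (U : Struc L) (X Y : Type) (A : U -> Prop)
    (lambda : ((X + Y -> U) -> Prop) -> R) (mu : ((X -> U) -> Prop) -> R)
    (nu : ((Y -> U) -> Prop) -> R) : Prop :=
  (forall S, Ldef U X A S -> lambda (cyl_x S) = mu S) /\
  (forall omega, Eset U A lambda mu omega ->
     forall S, Ldef U Y allU S -> omega (cyl_y S) = nu S).

Inductive bgen {Z : Type} (G : (Z -> Prop) -> Prop) : (Z -> Prop) -> Prop :=
| bg_base : forall S, G S -> bgen G S
| bg_top : bgen G (fun _ => True)
| bg_compl : forall S, bgen G S -> bgen G (fun z => ~ S z)
| bg_union : forall S T, bgen G S -> bgen G T -> bgen G (fun z => S z \/ T z).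

Definition Bxy {L} (U : Struc L) (X Y : Type) (A : U -> Prop) : ((X + Y -> U) -> Prop) -> Prop :=
  bgen (fun S => (exists T, Ldef U X allU T /\ forall c, S c <-> cyl_x T c)
                 \/ Ldef U (X + Y) A S).

(* Let C be the Boolean algebra B_xy(A) and D the algebra of all definable sets in xy.
   Given a definable d, the value F |-> inner(F ∩ d) + outer(F \ d), built from the C-inner
   and C-outer measures of omega, is finitely additive on the algebra generated by C and d,
   agrees with omega on C and gives d its inner measure; by Zorn's lemma it extends to a
   Keisler measure on D.  Every extension of omega|C lies in E(lambda, mu), because C contains
   L_xy(A) and the cylinders over L_x(U), so by the witness hypothesis it gives
   d = (phi(y) /\ x = x) the value nu(phi).  Hence d has inner C-measure nu(phi) and its
   complement has inner C-measure 1 - nu(phi): gamma^- is an inner approximation of d and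
   gamma^+ the complement of an inner approximation of its complement. *)

From Stdlib Require Import Reals Lra Classical ClassicalEpsilon FunctionalExtensionality PropExtensionality.
From Stdlib Require Fin.
From mathcomp Require boolp classical_sets.

Set Implicit Arguments.
Unset Strict Implicit.
Open Scope R_scope.

Section SetAlgebra.
Context {Z : Type}.
Implicit Types S T : Z -> Prop.

Definition setT : Z -> Prop := fun _ => True.
Definition set0 : Z -> Prop := fun _ => False.
Definition setC S : Z -> Prop := fun z => ~ S z.
Definition setU S T : Z -> Prop := fun z => S z \/ T z.
Definition setI S T : Z -> Prop := fun z => S z /\ T z.
Definition setD S T : Z -> Prop := fun z => S z /\ ~ T z.
Definition subset S T : Prop := forall z, S z -> T z.
Definition disjoint S T : Prop := forall z, S z -> T z -> False.

Lemma set_ext S T : (forall z, S z <-> T z) -> S = T.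
Proof.
  intro H; apply functional_extensionality; intro z.
  apply propositional_extensionality, H.
Qed.

Definition algebra (C : (Z -> Prop) -> Prop) : Prop :=
  C setT /\ (forall S, C S -> C (setC S)) /\ (forall S T, C S -> C T -> C (setU S T)).

Lemma fa_prob_sub (B C : (Z -> Prop) -> Prop) (m : (Z -> Prop) -> R) :
  (forall S, C S -> B S) -> fa_prob B m -> fa_prob C m.
Proof. intros CB [h0 [h1 h2]]; split; [|split]; auto. Qed.

Section Algebra.
Variable C : (Z -> Prop) -> Prop.
Hypothesis HC : algebra C.

Lemma algebra_setT : C setT. Proof. apply HC. Qed.
Lemma algebra_setC S : C S -> C (setC S). Proof. apply HC. Qed.
Lemma algebra_setU S T : C S -> C T -> C (setU S T). Proof. apply HC. Qed.

Lemma algebra_set0 : C set0.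
Proof.
  replace set0 with (setC setT) by (apply set_ext; unfold setC, setT, set0; tauto).
  apply algebra_setC, algebra_setT.
Qed.

Lemma algebra_setI S T : C S -> C T -> C (setI S T).
Proof.
  intros hS hT.
  replace (setI S T) with (setC (setU (setC S) (setC T)))
    by (apply set_ext; intro z; unfold setC, setU, setI; tauto).
  apply algebra_setC; auto.
  apply algebra_setU; apply algebra_setC; auto.
Qed.

Lemma algebra_setD S T : C S -> C T -> C (setD S T).
Proof.
  intros hS hT.
  replace (setD S T) with (setI S (setC T)) by (apply set_ext; reflexivity).
  apply algebra_setI; [|apply algebra_setC]; auto.
Qed.

End Algebra.

Section Measure.
Variables (C : (Z -> Prop) -> Prop) (m : (Z -> Prop) -> R).
Hypotheses (HC : algebra C) (Hm : fa_prob C m).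

Lemma measure_ge0 S : C S -> 0 <= m S. Proof. apply Hm. Qed.
Lemma measure_setT : m setT = 1. Proof. apply Hm. Qed.
Lemma measure_additive S T : C S -> C T -> disjoint S T -> m (setU S T) = m S + m T.
Proof. apply Hm. Qed.

Lemma measure_set0 : m set0 = 0.
Proof.
  pose proof (algebra_set0 HC) as h0.
  assert (E : setU set0 set0 = set0) by (apply set_ext; unfold setU, set0; tauto).
  pose proof (measure_additive h0 h0 (fun _ h _ => h)) as H.
  rewrite E in H; lra.
Qed.

Lemma measure_split S T : C S -> C T -> m S = m (setI S T) + m (setD S T).
Proof.
  intros hS hT.
  assert (E : S = setU (setI S T) (setD S T)).
  { apply set_ext; intro z; unfold setU, setI, setD; destruct (classic (T z)); tauto. }
  rewrite E at 1.
  apply measure_additive; [apply (algebra_setI HC) | apply (algebra_setD HC) |]; auto.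
  intros z [_ h1] [_ h2]; auto.
Qed.

Lemma measure_setD_sub S T : C S -> C T -> subset T S -> m (setD S T) = m S - m T.
Proof.
  intros hS hT hTS.
  rewrite (measure_split hS hT).
  replace (setI S T) with T by (apply set_ext; intro z; unfold setI; split; auto; tauto).
  ring.
Qed.

Lemma measure_le S T : C S -> C T -> subset S T -> m S <= m T.
Proof.
  intros hS hT hST.
  pose proof (measure_ge0 (algebra_setD HC hT hS)).
  rewrite (measure_setD_sub hT hS hST) in *; lra.
Qed.

Lemma measure_setC S : C S -> m (setC S) = 1 - m S.
Proof.
  intro hS.
  replace (setC S) with (setD setT S) by (apply set_ext; unfold setD, setT, setC; tauto).
  rewrite measure_setD_sub.
  - rewrite measure_setT; ring.
  - apply (algebra_setT HC).
  - exact hS.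
  - intros z _; exact I.
Qed.

Lemma measure_subadditive S T : C S -> C T -> m (setU S T) <= m S + m T.
Proof.
  intros hS hT.
  replace (setU S T) with (setU S (setD T S))
    by (apply set_ext; intro z; unfold setU, setD; tauto).
  rewrite measure_additive; [| exact hS | apply (algebra_setD HC hT hS) |].
  - pose proof (measure_le (algebra_setD HC hT hS) hT (fun z h => proj1 h)); lra.
  - intros z h [_ h']; auto.
Qed.

End Measure.
End SetAlgebra.

Section InnerMeasure.
Context {Z : Type}.
Variables (C : (Z -> Prop) -> Prop) (m : (Z -> Prop) -> R).

Definition inner_values (E : Z -> Prop) (r : R) : Prop :=
  exists c, C c /\ subset c E /\ r = m c.

Definition inner (E : Z -> Prop) : R := epsilon (inhabits 0) (is_lub (inner_values E)).
Definition outer (E : Z -> Prop) : R := 1 - inner (setC E).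

Hypotheses (HC : algebra C) (Hm : fa_prob C m).

Lemma inner_is_lub E : is_lub (inner_values E) (inner E).
Proof.
  unfold inner; apply epsilon_spec.
  destruct (completeness (inner_values E)) as [l Hl].
  - exists 1; intros r [c [hc [_ ->]]].
    rewrite <- (measure_setT Hm).
    apply (measure_le HC Hm hc (algebra_setT HC)); intros z _; exact I.
  - exists (m set0), set0; split; [apply (algebra_set0 HC) | split; [intros z [] | reflexivity]].
  - exists l; exact Hl.
Qed.

Lemma inner_ub c E : C c -> subset c E -> m c <= inner E.
Proof. intros hc hcE; apply (inner_is_lub E); exists c; auto. Qed.

Lemma inner_least E r : (forall c, C c -> subset c E -> m c <= r) -> inner E <= r.
Proof. intro H; apply (inner_is_lub E); intros x [c [hc [hcE ->]]]; auto. Qed.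

Lemma inner_ge0 E : 0 <= inner E.
Proof.
  rewrite <- (measure_set0 HC Hm).
  apply inner_ub; [apply (algebra_set0 HC) | intros z []].
Qed.

Lemma inner_approx E eps :
  0 < eps -> exists c, C c /\ subset c E /\ inner E - eps < m c.
Proof.
  intro heps; apply NNPP; intro Hnone.
  assert (inner E <= inner E - eps); [|lra].
  apply inner_least; intros c hc hcE.
  apply Rnot_lt_le; intro hlt; apply Hnone; eauto.
Qed.

Lemma inner_ext E E' : (forall z, E z <-> E' z) -> inner E = inner E'.
Proof. intro H; rewrite (set_ext H); reflexivity. Qed.

Lemma outer_lb c E : C c -> subset E c -> outer E <= m c.
Proof.
  intros hc hEc; unfold outer.
  assert (m (setC c) <= inner (setC E)).
  { apply inner_ub; [apply (algebra_setC HC hc) | intros z hz hE; apply hz, hEc, hE]. }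
  rewrite (measure_setC HC Hm hc) in *; lra.
Qed.

Lemma outer_greatest E r : (forall c, C c -> subset E c -> r <= m c) -> r <= outer E.
Proof.
  intro H; unfold outer.
  assert (inner (setC E) <= 1 - r); [|lra].
  apply inner_least; intros c hc hcE.
  assert (r <= m (setC c)).
  { apply H; [apply (algebra_setC HC hc) | intros z hz hcz; exact (hcE z hcz hz)]. }
  rewrite (measure_setC HC Hm hc) in *; lra.
Qed.

Lemma outer_ge0 E : 0 <= outer E.
Proof. apply outer_greatest; intros c hc _; exact (measure_ge0 Hm hc). Qed.

Lemma outer_set0 : outer set0 = 0.
Proof.
  apply Rle_antisym; [|apply outer_ge0].
  rewrite <- (measure_set0 HC Hm).
  apply outer_lb; [apply (algebra_set0 HC) | intros z h; exact h].
Qed.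

Lemma outer_ext E E' : (forall z, E z <-> E' z) -> outer E = outer E'.
Proof. intro H; rewrite (set_ext H); reflexivity. Qed.

Section Separated.
Variables (c : Z -> Prop) (P Q : Z -> Prop).
Hypotheses (hc : C c) (hPc : subset P c) (hQc : disjoint Q c).

Lemma inner_setU_separated : inner (setU P Q) = inner P + inner Q.
Proof.
  apply Rle_antisym.
  - apply inner_least; intros e he hePQ.
    rewrite (measure_split HC Hm he hc).
    apply Rplus_le_compat; apply inner_ub.
    + apply (algebra_setI HC he hc).
    + intros z [hez hcz]; destruct (hePQ z hez) as [hP | hQ]; [exact hP | contradiction (hQc hQ hcz)].
    + apply (algebra_setD HC he hc).
    + intros z [hez hcz]; destruct (hePQ z hez) as [hP | hQ]; [contradiction (hcz (hPc hP)) | exact hQ].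
  - assert (inner Q <= inner (setU P Q) - inner P); [|lra].
    apply inner_least; intros b hb hbQ.
    assert (inner P <= inner (setU P Q) - m b); [|lra].
    apply inner_least; intros a ha haP.
    assert (hab : disjoint a b) by (intros z hz hz'; exact (hQc (hbQ z hz') (hPc (haP z hz)))).
    assert (m (setU a b) <= inner (setU P Q)).
    { apply inner_ub; [apply (algebra_setU HC ha hb) |].
      intros z [hz | hz]; [left; apply haP | right; apply hbQ]; exact hz. }
    rewrite (measure_additive Hm ha hb hab) in *; lra.
Qed.

Lemma outer_setU_separated : outer (setU P Q) = outer P + outer Q.
Proof.
  apply Rle_antisym.
  - assert (outer (setU P Q) - outer P <= outer Q); [|lra].
    apply outer_greatest; intros b hb hQb.
    assert (outer (setU P Q) - m b <= outer P); [|lra].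
    apply outer_greatest; intros a ha hPa.
    assert (outer (setU P Q) <= m (setU a b)).
    { apply outer_lb; [apply (algebra_setU HC ha hb) |].
      intros z [hz | hz]; [left; apply hPa | right; apply hQb]; exact hz. }
    pose proof (measure_subadditive HC Hm ha hb); lra.
  - apply outer_greatest; intros e he hPQe.
    rewrite (measure_split HC Hm he hc).
    apply Rplus_le_compat; apply outer_lb.
    + apply (algebra_setI HC he hc).
    + intros z hz; split; [apply hPQe; left | apply hPc]; exact hz.
    + apply (algebra_setD HC he hc).
    + intros z hz; split; [apply hPQe; right; exact hz | exact (hQc hz)].
Qed.

End Separated.

(* Both sides are computed inside c: a C-set below c ∩ E is the complement in c
   of a C-set above c \ E. *)
Lemma inner_outer_partition c E : C c -> inner (setI c E) + outer (setD c E) = m c.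
Proof.
  intro hc; apply Rle_antisym.
  - assert (inner (setI c E) <= m c - outer (setD c E)); [|lra].
    apply inner_least; intros a ha haE.
    assert (outer (setD c E) <= m (setD c a)).
    { apply outer_lb; [apply (algebra_setD HC hc ha) |].
      intros z [hcz hEz]; split; [exact hcz | intro haz; exact (hEz (proj2 (haE z haz)))]. }
    rewrite (measure_setD_sub HC Hm hc ha (fun z hz => proj1 (haE z hz))) in *; lra.
  - assert (m c - inner (setI c E) <= outer (setD c E)); [|lra].
    apply outer_greatest; intros e he hce.
    rewrite (measure_split HC Hm hc he).
    assert (m (setI c e) <= m e).
    { apply (measure_le HC Hm (algebra_setI HC hc he) he); intros z hz; exact (proj2 hz). }
    assert (m (setD c e) <= inner (setI c E)).
    { apply inner_ub; [apply (algebra_setD HC hc he) |].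
      intros z [hcz hez]; split; [exact hcz |].
      apply NNPP; intro hEz; exact (hez (hce z (conj hcz hEz))). }
    lra.
Qed.

Section Adjoin.
Variable d : Z -> Prop.

Definition adjoin (F : Z -> Prop) : Prop :=
  exists c1 c2, C c1 /\ C c2 /\ forall z, F z <-> (c1 z /\ d z) \/ (c2 z /\ ~ d z).

Definition adjoin_measure (F : Z -> Prop) : R := inner (setI F d) + outer (setD F d).

Lemma adjoin_algebra : algebra adjoin.
Proof.
  split; [|split].
  - exists setT, setT; split; [|split]; [apply (algebra_setT HC) .. |].
    intro z; unfold setT; destruct (classic (d z)); tauto.
  - intros F [c1 [c2 [h1 [h2 hF]]]].
    exists (setC c1), (setC c2); split; [|split]; [apply (algebra_setC HC); assumption .. |].
    intro z; unfold setC; rewrite hF; destruct (classic (d z)); tauto.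
  - intros F G [c1 [c2 [h1 [h2 hF]]]] [c1' [c2' [h1' [h2' hG]]]].
    exists (setU c1 c1'), (setU c2 c2'); split; [|split]; [apply (algebra_setU HC); assumption .. |].
    intro z; unfold setU; rewrite hF, hG; tauto.
Qed.

Lemma adjoin_base c : C c -> adjoin c.
Proof. intro hc; exists c, c; split; [|split]; auto; intro z; destruct (classic (d z)); tauto. Qed.

Lemma adjoin_generator : adjoin d.
Proof.
  exists setT, set0; split; [|split]; [apply (algebra_setT HC) | apply (algebra_set0 HC) |].
  intro z; unfold setT, set0; tauto.
Qed.

Lemma adjoin_within (D : (Z -> Prop) -> Prop) :
  algebra D -> (forall c, C c -> D c) -> D d -> forall F, adjoin F -> D F.
Proof.
  intros HD CD hd F [c1 [c2 [h1 [h2 hF]]]].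
  rewrite (set_ext (T := setU (setI c1 d) (setD c2 d)) hF).
  apply (algebra_setU HD); [apply (algebra_setI HD) | apply (algebra_setD HD)]; auto.
Qed.

Lemma adjoin_measure_base c : C c -> adjoin_measure c = m c.
Proof. apply inner_outer_partition. Qed.

Lemma adjoin_measure_generator : adjoin_measure d = inner d.
Proof.
  unfold adjoin_measure.
  rewrite (outer_ext (E' := set0)), outer_set0 by (unfold setD, set0; tauto).
  rewrite (inner_ext (E' := d)) by (unfold setI; tauto).
  ring.
Qed.

(* The trace F ∩ d only sees c1 and the trace F \ d only sees c2, so disjoint
   members of [adjoin] are separated by c1 on d and by c2 off d. *)
Lemma adjoin_measure_fa_prob : fa_prob adjoin adjoin_measure.
Proof.
  split; [|split].
  - intros F _; pose proof (inner_ge0 (setI F d)); pose proof (outer_ge0 (setD F d)).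
    unfold adjoin_measure; lra.
  - change (adjoin_measure setT = 1).
    rewrite adjoin_measure_base by apply (algebra_setT HC).
    apply (measure_setT Hm).
  - intros F G [c1 [c2 [h1 [h2 hF]]]] _ hFG.
    change (adjoin_measure (setU F G) = adjoin_measure F + adjoin_measure G).
    unfold adjoin_measure.
    rewrite (inner_ext (E' := setU (setI F d) (setI G d))) by (unfold setU, setI; tauto).
    rewrite (outer_ext (E' := setU (setD F d) (setD G d))) by (unfold setU, setD; tauto).
    rewrite (inner_setU_separated h1), (outer_setU_separated h2); [ring | ..].
    + intros z [hz hdz]; apply hF in hz; tauto.
    + intros z [hz hdz] hc2; apply (hFG z); [apply hF; tauto | exact hz].
    + intros z [hz hdz]; apply hF in hz; tauto.
    + intros z [hz hdz] hc1; apply (hFG z); [apply hF; tauto | exact hz].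
Qed.

End Adjoin.
End InnerMeasure.

Lemma exists_maximal_above (T : Type) (P : (T -> Prop) -> Prop) (X0 : T -> Prop) :
  P X0 ->
  (forall (I : Type) (X : I -> T -> Prop), inhabited I -> (forall i, P (X i)) ->
     (forall i j, subset (X i) (X j) \/ subset (X j) (X i)) ->
     P (fun t => exists i, X i t)) ->
  exists M, P M /\ subset X0 M /\ forall X, P X -> subset M X -> subset X M.
Proof.
  intros HX0 Hchain.
  pose (S := {X : T -> Prop | P X /\ subset X0 X}).
  pose (le := fun s s' : S => boolp.asbool (subset (proj1_sig s) (proj1_sig s'))).
  destruct (classical_sets.ZL_preorder (exist _ X0 (conj HX0 (fun _ h => h)) : S) (R := le))
    as [[M [HM HX0M]] Mmax].
  - intro s; apply boolp.asboolT; intros t h; exact h.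
  - intros r s t h1 h2; apply boolp.asboolT; intros x hx.
    exact (boolp.asboolW h2 _ (boolp.asboolW h1 _ hx)).
  - intros Ch hCh.
    destruct (classic (exists s, Ch s)) as [[s0 hs0] | Hempty].
    + pose (X := fun i : {s | Ch s} => proj1_sig (proj1_sig i)).
      assert (PU : P (fun t => exists i, X i t)).
      { apply Hchain.
        - exact (inhabits (exist _ s0 hs0)).
        - intro i; exact (proj1 (proj2_sig (proj1_sig i))).
        - intros [s hs] [s' hs'].
          destruct (hCh s s' hs hs') as [h | h]; [left | right]; exact (boolp.asboolW h). }
      assert (X0U : subset X0 (fun t => exists i, X i t)).
      { intros t ht; exists (exist _ s0 hs0); exact (proj2 (proj2_sig s0) t ht). }
      exists (exist _ _ (conj PU X0U) : S); intros s hs.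
      apply boolp.asboolT; intros t ht; exists (exist _ s hs); exact ht.
    + exists (exist _ X0 (conj HX0 (fun _ h => h))).
      intros s hs; contradiction Hempty; eauto.
  - exists M; split; [exact HM | split; [exact HX0M |]].
    intros X HX hMX.
    apply boolp.asboolW.
    apply (Mmax (exist _ X (conj HX (fun t h => hMX t (HX0M t h))))).
    apply boolp.asboolT; exact hMX.
Qed.

Section MeasureGraph.
Context {Z : Type}.
Variable D : (Z -> Prop) -> Prop.

(* Partial extensions are encoded by their graphs, so that a chain of them has
   its union as upper bound; every clause mentions at most two points of the
   graph, which is what makes it stable under unions of chains. *)
Record measure_graph (G : (Z -> Prop) * R -> Prop) : Prop := {
  mg_functional : forall E a b, G (E, a) -> G (E, b) -> a = b;
  mg_within : forall E a, G (E, a) -> D E;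
  mg_ge0 : forall E a, G (E, a) -> 0 <= a;
  mg_setT : G (setT, 1);
  mg_setC : forall E a, G (E, a) -> exists b, G (setC E, b);
  mg_setU : forall E F a b, G (E, a) -> G (F, b) -> exists c, G (setU E F, c);
  mg_additive : forall E F a b,
    G (E, a) -> G (F, b) -> disjoint E F -> G (setU E F, a + b) }.

Definition graph_of (B : (Z -> Prop) -> Prop) (m : (Z -> Prop) -> R) (p : (Z -> Prop) * R) : Prop :=
  B (fst p) /\ snd p = m (fst p).

Definition gdom (G : (Z -> Prop) * R -> Prop) (E : Z -> Prop) : Prop := exists a, G (E, a).
Definition gval (G : (Z -> Prop) * R -> Prop) (E : Z -> Prop) : R :=
  epsilon (inhabits 0) (fun a => G (E, a)).

Lemma graph_of_measure_graph B m :
  algebra B -> (forall E, B E -> D E) -> fa_prob B m -> measure_graph (graph_of B m).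
Proof.
  intros HB BD Hm; unfold graph_of; split; cbn.
  - intros E a b [_ ->] [_ ->]; reflexivity.
  - intros E a [hE _]; auto.
  - intros E a [hE ->]; exact (measure_ge0 Hm hE).
  - split; [apply (algebra_setT HB) | symmetry; apply (measure_setT Hm)].
  - intros E a [hE _]; exists (m (setC E)); split; [apply (algebra_setC HB hE) | reflexivity].
  - intros E F a b [hE _] [hF _]; exists (m (setU E F)).
    split; [apply (algebra_setU HB hE hF) | reflexivity].
  - intros E F a b [hE ->] [hF ->] hEF.
    split; [apply (algebra_setU HB hE hF) | symmetry; apply (measure_additive Hm hE hF hEF)].
Qed.

Lemma gval_spec G E a : measure_graph G -> G (E, a) -> gval G E = a.
Proof.
  intros HG h; apply (mg_functional HG (E := E)); [| exact h].
  apply (epsilon_spec (inhabits 0) (fun a => G (E, a))); exists a; exact h.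
Qed.

Lemma gdom_algebra G : measure_graph G -> algebra (gdom G).
Proof.
  intro HG; split; [|split].
  - exists 1; apply (mg_setT HG).
  - intros E [a h]; exact (mg_setC HG h).
  - intros E F [a h] [b h']; exact (mg_setU HG h h').
Qed.

Lemma gval_fa_prob G : measure_graph G -> fa_prob (gdom G) (gval G).
Proof.
  intro HG; split; [|split].
  - intros E [a h]; rewrite (gval_spec HG h); exact (mg_ge0 HG h).
  - exact (gval_spec HG (mg_setT HG)).
  - intros E F [a h] [b h'] hEF.
    rewrite (gval_spec HG h), (gval_spec HG h').
    exact (gval_spec HG (mg_additive HG h h' hEF)).
Qed.

Lemma measure_graph_union (I : Type) (G : I -> (Z -> Prop) * R -> Prop) :
  inhabited I -> (forall i, measure_graph (G i)) ->
  (forall i j, subset (G i) (G j) \/ subset (G j) (G i)) ->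
  measure_graph (fun p => exists i, G i p).
Proof.
  intros [i0] HG Hchain.
  assert (common : forall p q, (exists i, G i p) -> (exists j, G j q) ->
                   exists k, G k p /\ G k q).
  { intros p q [i hp] [j hq].
    destruct (Hchain i j) as [hij | hji]; [exists j | exists i]; auto. }
  split.
  - intros E a b hp hq; destruct (common _ _ hp hq) as [k [h h']].
    exact (mg_functional (HG k) h h').
  - intros E a [i h]; exact (mg_within (HG i) h).
  - intros E a [i h]; exact (mg_ge0 (HG i) h).
  - exists i0; exact (mg_setT (HG i0)).
  - intros E a [i h]; destruct (mg_setC (HG i) h) as [b hb]; exists b, i; exact hb.
  - intros E F a b hp hq; destruct (common _ _ hp hq) as [k [h h']].
    destruct (mg_setU (HG k) h h') as [c hc]; exists c, k; exact hc.
  - intros E F a b hp hq hEF; destruct (common _ _ hp hq) as [k [h h']].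
    exists k; exact (mg_additive (HG k) h h' hEF).
Qed.

Hypothesis HD : algebra D.

(* Horn-Tarski: a maximal partial extension is total, since otherwise adjoining
   a missing set extends it further. *)
Lemma extend_to_algebra B m :
  algebra B -> (forall E, B E -> D E) -> fa_prob B m ->
  exists m', fa_prob D m' /\ forall E, B E -> m' E = m E.
Proof.
  intros HB BD Hm.
  destruct (exists_maximal_above (P := measure_graph) (X0 := graph_of B m)) as [M [HM [BM Mmax]]].
  - exact (graph_of_measure_graph HB BD Hm).
  - intros I G hI HG Hchain; exact (measure_graph_union hI HG Hchain).
  assert (MD : forall E, gdom M E -> D E) by (intros E [a h]; exact (mg_within HM h)).
  assert (Mtotal : forall d, D d -> gdom M d).
  { intros d hd.
    pose (B' := adjoin (gdom M) d); pose (m' := adjoin_measure (gdom M) (gval M) d).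
    assert (HB' : measure_graph (graph_of B' m')).
    { apply graph_of_measure_graph.
      - exact (adjoin_algebra (gdom_algebra HM) d).
      - exact (adjoin_within HD MD hd).
      - exact (adjoin_measure_fa_prob (gdom_algebra HM) (gval_fa_prob HM) d). }
    assert (MB' : subset M (graph_of B' m')).
    { intros [E a] h; assert (hE : gdom M E) by (exists a; exact h).
      split; cbn.
      - exact (adjoin_base d hE).
      - unfold m'; rewrite (adjoin_measure_base (gdom_algebra HM) (gval_fa_prob HM) d hE).
        symmetry; exact (gval_spec HM h). }
    exists (m' d); apply (Mmax _ HB' MB').
    split; [exact (adjoin_generator (gdom_algebra HM) d) | reflexivity]. }
  exists (gval M); split.
  - exact (fa_prob_sub Mtotal (gval_fa_prob HM)).
  - intros E hE; apply (gval_spec HM), BM; split; [exact hE | reflexivity].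
Qed.

End MeasureGraph.

Definition determined {Z : Type} (C D : (Z -> Prop) -> Prop) (m : (Z -> Prop) -> R)
    (d : Z -> Prop) (r : R) : Prop :=
  forall m', fa_prob D m' -> (forall c, C c -> m' c = m c) -> m' d = r.

Section Determined.
Context {Z : Type}.
Variables (C D : (Z -> Prop) -> Prop) (m : (Z -> Prop) -> R).
Hypotheses (HC : algebra C) (HD : algebra D) (CD : forall c, C c -> D c) (Hm : fa_prob C m).

Lemma extension_attaining_inner d :
  D d -> exists m', fa_prob D m' /\ (forall c, C c -> m' c = m c) /\ m' d = inner C m d.
Proof.
  intro hd.
  destruct (extend_to_algebra HD (adjoin_algebra HC d) (adjoin_within HD CD hd)
              (adjoin_measure_fa_prob HC Hm d)) as [m' [Hm' agree]].
  exists m'; split; [exact Hm' | split].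
  - intros c hc; rewrite agree by exact (adjoin_base d hc).
    exact (adjoin_measure_base HC Hm d hc).
  - rewrite agree by exact (adjoin_generator HC d).
    exact (adjoin_measure_generator HC Hm d).
Qed.

Lemma inner_determined d r : D d -> determined C D m d r -> inner C m d = r.
Proof.
  intros hd Hdet.
  destruct (extension_attaining_inner hd) as [m' [Hm' [agree <-]]].
  exact (Hdet m' Hm' agree).
Qed.

Lemma determined_setC d r : D d -> determined C D m d r -> determined C D m (setC d) (1 - r).
Proof.
  intros hd Hdet m' Hm' agree.
  rewrite (measure_setC HD Hm' hd), (Hdet m' Hm' agree); reflexivity.
Qed.

Lemma determined_sandwich d r : D d -> determined C D m d r ->
  forall eps, 0 < eps -> exists cm cp, C cm /\ C cp /\ subset cm d /\ subset d cp /\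
    r - eps < m cm /\ m cm <= r /\ r <= m cp /\ m cp < r + eps.
Proof.
  intros hd Hdet eps heps.
  assert (hdC : D (setC d)) by exact (algebra_setC HD hd).
  pose proof (inner_determined hd Hdet) as Hin.
  pose proof (inner_determined hdC (determined_setC hd Hdet)) as Hout.
  destruct (inner_approx HC Hm d heps) as [cm [hcm [hcmd hcm_gt]]].
  destruct (inner_approx HC Hm (setC d) heps) as [c [hc [hcd hc_gt]]].
  pose proof (inner_ub HC Hm hcm hcmd).
  pose proof (inner_ub HC Hm hc hcd).
  exists cm, (setC c).
  split; [exact hcm | split; [exact (algebra_setC HC hc) | split; [exact hcmd | split]]].
  - intros z hz hcz; exact (hcd z hcz hz).
  - rewrite (measure_setC HC Hm hc); lra.
Qed.

End Determined.

Fixpoint trename {L M V W} (f : V -> W) (t : term L M V) : term L M W :=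
  match t with
  | tvar x => tvar (f x)
  | tpar c => tpar c
  | tapp g args => tapp g (fun i => trename f (args i))
  end.

Fixpoint frename {L M V} (phi : form L M V) {struct phi} :
    forall W, (V -> W) -> form L M W :=
  match phi in form _ _ V0 return forall W, (V0 -> W) -> form L M W with
  | feq _ t1 t2 => fun W f => feq (trename f t1) (trename f t2)
  | frel _ r args => fun W f => frel r (fun i => trename f (args i))
  | fneg _ p => fun W f => fneg (frename p f)
  | fand _ p q => fun W f => fand (frename p f) (frename q f)
  | fex _ p => fun W f => fex (frename p (option_map f))
  end.

Lemma teval_trename {L} (U : Struc L) V W (f : V -> W) (v : W -> U) (t : term L U V) :
  teval U v (trename f t) = teval U (fun x => v (f x)) t.
Proof.
  induction t; simpl; auto.
  f_equal; apply functional_extensionality; auto.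
Qed.

Lemma sat_frename {L} (U : Struc L) V (phi : form L U V) :
  forall W (f : V -> W) (v : W -> U),
    sat U (frename phi f) v <-> sat U phi (fun x => v (f x)).
Proof.
  induction phi as [V t1 t2 | V r args | V p IH | V p IHp q IHq | V p IH];
    intros W f v; simpl.
  - rewrite !teval_trename; reflexivity.
  - replace (fun i => teval U v (trename f (args i)))
      with (fun i => teval U (fun x => v (f x)) (args i)); [reflexivity |].
    apply functional_extensionality; intro; symmetry; apply teval_trename.
  - rewrite IH; reflexivity.
  - rewrite IHp, IHq; reflexivity.
  - assert (Hcons : forall a, (fun x => scons a v (option_map f x)) = scons a (fun x => v (f x))).
    { intro a; apply functional_extensionality; intros [x |]; reflexivity. }
    split; intros [a h]; exists a.
    + rewrite <- Hcons; apply IH, h.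
    + apply IH; rewrite Hcons; exact h.
Qed.

Lemma tparams_in_allU {L M V} (t : term L M V) : tparams_in allU t.
Proof. induction t; simpl; auto; exact I. Qed.

Lemma params_in_allU {L M V} (phi : form L M V) : params_in allU phi.
Proof. induction phi; simpl; auto using tparams_in_allU. Qed.

Section Definable.
Variables (L : Language) (U : Struc L).

Lemma Ldef_allU V B S : Ldef U V B S -> Ldef U V allU S.
Proof. intros [phi [_ h]]; exists phi; split; [apply params_in_allU | exact h]. Qed.

Lemma Ldef_algebra V : algebra (Ldef U V allU).
Proof.
  destruct (carrier_inh U) as [c0]; split; [|split].
  - exists (feq (tpar c0) (tpar c0)); split; [apply params_in_allU | simpl; unfold setT; tauto].
  - intros S [p [_ h]]; exists (fneg p); split; [apply params_in_allU |].
    intro a; simpl; unfold setC; rewrite h; reflexivity.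
  - intros S T [p [_ h]] [q [_ h']]; exists (fneg (fand (fneg p) (fneg q))).
    split; [apply params_in_allU |].
    intro a; simpl; unfold setU; rewrite h, h'; tauto.
Qed.

Lemma Ldef_rename V W (f : V -> W) S :
  Ldef U V allU S -> Ldef U W allU (fun c => S (fun x => c (f x))).
Proof.
  intros [p [_ h]]; exists (frename p f); split; [apply params_in_allU |].
  intro a; rewrite sat_frename; apply h.
Qed.

Variables (A : U -> Prop) (X Y : Type).

Lemma Bxy_algebra : algebra (@Bxy L U X Y A).
Proof.
  split; [|split]; [apply bg_top | apply bg_compl | apply bg_union].
Qed.

Lemma Bxy_Ldef (S : (X + Y -> U) -> Prop) : Bxy U A S -> Ldef U (X + Y) allU S.
Proof.
  induction 1 as [S [[T [hT hS]] | hS] | | S _ IH | S T _ IHS _ IHT].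
  - destruct (Ldef_rename (@inl X Y) hT) as [p [hp h]].
    exists p; split; [exact hp | intro c; rewrite hS; apply h].
  - exact (Ldef_allU hS).
  - apply (algebra_setT (Ldef_algebra (X + Y))).
  - apply (algebra_setC (Ldef_algebra (X + Y)) IH).
  - apply (algebra_setU (Ldef_algebra (X + Y)) IHS IHT).
Qed.

Lemma Eset_of_agree_on_Bxy lambda mu omega omega' :
  Eset U A lambda mu omega -> keisler U (X + Y) allU omega' ->
  (forall c, Bxy U A c -> omega' c = omega c) -> Eset U A lambda mu omega'.
Proof.
  intros [_ [Hlam Hmu]] Hom' agree; split; [exact Hom' | split].
  - intros S hS; rewrite agree by (apply bg_base; right; exact hS); exact (Hlam S hS).
  - intros S hS; rewrite agree by (apply bg_base; left; exists S; split; [exact hS | reflexivity]).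
    exact (Hmu S hS).
Qed.

End Definable.

Theorem proposition3p17 (L : Language) (U : Struc L) (K : Type)
  (HU : monster K U) (A : U -> Prop) (HA : small K A) (n m : nat)
  (mu : ((Fin.t n -> U) -> Prop) -> R) (nu : ((Fin.t m -> U) -> Prop) -> R)
  (lambda : ((Fin.t n + Fin.t m -> U) -> Prop) -> R) :
  keisler U (Fin.t n) allU mu ->
  keisler U (Fin.t m) allU nu ->
  keisler U (Fin.t n + Fin.t m) A lambda ->
  witnesses U A lambda mu nu ->
  forall omega : ((Fin.t n + Fin.t m -> U) -> Prop) -> R,
    Eset U A lambda mu omega ->
  forall phi : (Fin.t m -> U) -> Prop, Ldef U (Fin.t m) allU phi ->
  forall eps : R, 0 < eps ->
  exists gm gp : (Fin.t n + Fin.t m -> U) -> Prop,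
    Bxy U A gm /\ Bxy U A gp /\
    (forall c, gm c -> cyl_y phi c) /\ (forall c, cyl_y phi c -> gp c) /\
    omega gp - omega gm < eps /\
    Rabs (omega gp - nu phi) < eps /\ Rabs (omega gm - nu phi) < eps.
Proof.
  intros _ _ _ [_ Hwit] omega Homega phi Hphi eps Heps.
  assert (Hdet : determined (@Bxy L U _ _ A) (Ldef U _ allU) omega (cyl_y phi) (nu phi)).
  { intros omega' Hom' agree.
    exact (Hwit omega' (Eset_of_agree_on_Bxy Homega Hom' agree) phi Hphi). }
  assert (Heps2 : 0 < eps / 2) by lra.
  destruct (determined_sandwich (Bxy_algebra A _ _) (Ldef_algebra U _) (@Bxy_Ldef L U A _ _)
              (fa_prob_sub (@Bxy_Ldef L U A _ _) (proj1 Homega))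
              (Ldef_rename inr Hphi) Hdet Heps2)
    as [gm [gp [hgm [hgp [hgm_phi [hphi_gp bounds]]]]]].
  exists gm, gp.
  repeat split; auto; [lra | apply Rabs_def1 ..]; lra.
Qed.
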